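(* Let $(P,\lambda)$ be a marked poset which is strict and irredundant. If all inequalities describing the marked chain polytope $\mathcal{C}(P,\lambda)$ (in an irredundant description) are of the form $x_i\ge 0$ for $i\in P\setminus P^*$ or $\sum_{i\in I}x_i\le 1$ for subsets $I\subseteq P\setminus P^*$, then $\mathcal{C}(P,\lambda)$ is the chain polytope of some poset on the set $P\setminus P^*$.
   Context: A marked poset $(P,\lambda)$ is a finite poset $(P,\preceq)$ together with an induced subposet $P^*\subseteq P$ of marked elements and an order-preserving marking $\lambda:P^*\to\mathbb{R}$; it is always assumed that all minimal and all maximal elements of $P$ lie in $P^*$. It is strict if $\lambda(a)<\lambda(b)$ whenever $a\prec b$ in $P^*$, and irredundant (regular) if for every covering relation $p\prec q$ in $P$ and all $a,b\in P^*$ with $a\preceq q$ and $p\preceq b$, one has $a=b$ or $\lambda(a)<\lambda(b)$. The marked chain polytope $\mathcal{C}(P,\lambda)$ is the set of all $x\in\mathbb{R}_{\ge0}^{P\setminus P^*}$ with $x_{p_1}+\dots+x_{p_k}\le\lambda(b)-\lambda(a)$ for every maximal chain $a\prec p_1\prec\cdots\prec p_k\prec b$ in $P$ with $a,b\in P^*$ and $p_1,\dots,p_k\in P\setminus P^*$. The chain polytope of a finite poset $Q$ is the set of $x\in\mathbb{R}^Q$ with $x_c\ge0$ for all $c$ and $x_{c_1}+\dots+x_{c_k}\le 1$ for every chain $c_1\prec\cdots\prec c_k$ in $Q$. *)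

From HB Require Import structures.
From mathcomp Require Import all_boot all_order all_algebra.
Set Implicit Arguments. Unset Strict Implicit. Unset Printing Implicit Defensive.
Import Order.TTheory GRing.Theory Num.Theory.
Local Open Scope ring_scope.

(* Marked posets: the underlying finite poset is a finPOrderType P; the
   marked elements form a set Pstar : {set P}; the marking is a function
   lam : P -> R of which only the values on Pstar are relevant. *)

Definition unmarked (d : Order.disp_t) (P : finPOrderType d) (Pstar : {set P}) :=
  {p : P | p \notin Pstar}.

Definition covers (d : Order.disp_t) (P : finPOrderType d) (p q : P) : bool :=
  ((p < q) && [forall r : P, ~~ ((p < r) && (r < q))])%O.

Definition marked_poset (R : realFieldType) (d : Order.disp_t) (P : finPOrderType d)
    (Pstar : {set P}) (lam : P -> R) : Prop :=
  [/\ forall a b : P, a \in Pstar -> b \in Pstar -> (a <= b)%O -> lam a <= lam b,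
      forall p : P, (forall q : P, (q <= p)%O -> q = p) -> p \in Pstar
    & forall p : P, (forall q : P, (p <= q)%O -> q = p) -> p \in Pstar].

Definition strict_marked (R : realFieldType) (d : Order.disp_t) (P : finPOrderType d)
    (Pstar : {set P}) (lam : P -> R) : Prop :=
  forall a b : P, a \in Pstar -> b \in Pstar -> (a < b)%O -> lam a < lam b.

(* irredundant (regular) marked poset *)
Definition regular_marked (R : realFieldType) (d : Order.disp_t) (P : finPOrderType d)
    (Pstar : {set P}) (lam : P -> R) : Prop :=
  forall p q : P, covers p q ->
  forall a b : P, a \in Pstar -> b \in Pstar -> (a <= q)%O -> (p <= b)%O ->
    a = b \/ lam a < lam b.

Definition marked_chain_polytope (R : realFieldType) (d : Order.disp_t)
    (P : finPOrderType d) (Pstar : {set P}) (lam : P -> R)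
    (x : unmarked Pstar -> R) : Prop :=
  (forall p, 0 <= x p) /\
  forall (a b : P) (ps : seq (unmarked Pstar)),
    a \in Pstar -> b \in Pstar ->
    path (@covers d P) a (rcons (map val ps) b) ->
    \sum_(p <- ps) x p <= lam b - lam a.

Inductive ineq (Q : finType) :=
  | Ineq_nonneg of Q
  | Ineq_sumle of {set Q}.

Definition sat_ineq (R : realFieldType) (Q : finType) (x : Q -> R) (h : ineq Q) : Prop :=
  match h with
  | Ineq_nonneg i => 0 <= x i
  | Ineq_sumle J => \sum_(i in J) x i <= 1
  end.

Definition irredundant_description (R : realFieldType) (Q : finType)
    (C : (Q -> R) -> Prop) (m : nat) (D : 'I_m -> ineq Q) : Prop :=
  (forall x, C x <-> forall k, sat_ineq x (D k)) /\
  (forall j : 'I_m, exists x : Q -> R,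
      (forall k, k != j -> sat_ineq x (D k)) /\ ~ sat_ineq x (D j)).

Definition is_porder (Q : finType) (r : rel Q) : Prop :=
  [/\ reflexive r, antisymmetric r & transitive r].

Definition is_chain (Q : finType) (r : rel Q) (S : {set Q}) : Prop :=
  {in S &, forall a b, r a b \/ r b a}.

Definition chain_polytope (R : realFieldType) (Q : finType) (r : rel Q) (x : Q -> R) : Prop :=
  (forall c, 0 <= x c) /\
  forall S : {set Q}, is_chain r S -> \sum_(c in S) x c <= 1.

Arguments marked_chain_polytope {R d P} Pstar lam x.

From mathcomp Require Import all_boot all_order all_algebra.
From mathcomp Require Import lra.
Import Order.TTheory GRing.Theory Num.Theory.
Local Open Scope ring_scope.
Set Implicit Arguments. Unset Strict Implicit.

(* Order the unmarked elements by the reflexive-transitive closure of the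
   covering relation among them.  Its chains are exactly the sets of unmarked
   elements lying on one maximal chain a <. p_1 <. ... <. p_k <. b of P with
   a, b marked, so it suffices to show lam b - lam a = 1 for every such chain.
   Strictness and regularity give heights lam a = g_0 <= ... <= g_k = lam b,
   g_i lying between the largest mark below p_(i+1) and the smallest mark above
   p_i, with room to spare when 0 < i < k.  The increments x_(p_i) = g_i - g_(i-1)
   form a point of C(P, lam) on which the chain inequality is tight.  Scaling x
   up leaves C(P, lam), so some inequality sum_(i in J) x_i <= 1 of the
   description is tight at x as well; moving height from some p outside J to
   some q in J would violate it, so J contains the support of x and
   lam b - lam a = sum_i x_(p_i) = sum_(i in J) x_i = 1. *)

Section Covers.
Variables (d : Order.disp_t) (P : finPOrderType d).
Implicit Types p q r : P.

Lemma covers_lt p q : covers p q -> (p < q)%O.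
Proof. by case/andP. Qed.

Lemma covers_between p q r : covers p q -> (p <= r)%O -> (r <= q)%O ->
  r = p \/ r = q.
Proof.
case/andP=> _ /forallP noMid; rewrite le_eqVlt => /predU1P[<-|pr]; first by left.
rewrite le_eqVlt => /predU1P[->|rq]; first by right.
by have := noMid r; rewrite pr rq.
Qed.

Lemma covers_path_lt p s : path (@covers d P) p s -> path <%O p s.
Proof. by apply: sub_path => ? ? /covers_lt. Qed.

Lemma proper_below p q : (p < q)%O -> [set z | (z < p)%O] \proper [set z | (z < q)%O].
Proof.
move=> pq; apply/properP; split; last by exists p; rewrite !inE ?pq ?ltxx.
by apply/subsetP => z; rewrite !inE => /lt_trans; apply.
Qed.

Lemma proper_above p q : (p < q)%O -> [set z | (q < z)%O] \proper [set z | (p < z)%O].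
Proof.
move=> pq; apply/properP; split; last by exists q; rewrite !inE ?pq ?ltxx.
by apply/subsetP => z; rewrite !inE; apply: lt_trans.
Qed.

Lemma exists_covers_le q u : (q < u)%O -> exists2 w, (q <= w)%O & covers w u.
Proof.
move=> qu; pose between := [pred w | (q <= w)%O && (w < u)%O].
have [|w /andP[qw wu] wmax] := @arg_maxnP _ q between (fun w => #|[set z | (z < w)%O]|).
  by rewrite /= lexx qu.
exists w => //; rewrite /covers wu; apply/forallP => r; apply/negP => /andP[wr ru].
have := wmax r; rewrite /= (le_trans qw (ltW wr)) ru => /(_ isT).
by rewrite leqNgt (proper_card (proper_below wr)).
Qed.

Lemma exists_covers_ge u q : (u < q)%O -> exists2 w, covers u w & (w <= q)%O.
Proof.
move=> uq; pose between := [pred w | (u < w)%O && (w <= q)%O].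
have [|w /andP[uw wq] wmax] := @arg_maxnP _ q between (fun w => #|[set z | (w < z)%O]|).
  by rewrite /= lexx uq.
exists w => //; rewrite /covers uw; apply/forallP => r; apply/negP => /andP[ur rw].
have := wmax r; rewrite /= (le_trans (ltW rw) wq) ur => /(_ isT).
by rewrite leqNgt (proper_card (proper_above rw)).
Qed.

End Covers.

Section Sums.
Variables (R : numDomainType) (Q : finType).

Lemma telescope_index (T : eqType) (s : seq T) (g : nat -> R) : uniq s ->
  \sum_(u <- s) (g (index u s).+1 - g (index u s)) = g (size s) - g 0.
Proof.
case: s => [|x0 s] us; first by rewrite big_nil subrr.
rewrite (big_nth x0) -(telescope_sumr _ (leq0n _)).
by apply: eq_big_nat => i /andP[_ ilt]; rewrite index_uniq.
Qed.

Lemma sum_set_le_seq (x : Q -> R) (S : {set Q}) s : (forall i, 0 <= x i) ->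
  uniq s -> {subset S <= s} -> \sum_(i in S) x i <= \sum_(i <- s) x i.
Proof.
move=> x_ge0 us Ss; rewrite big_uniq // [X in _ <= X](bigID (mem S)) /=.
have -> : \sum_(i in s | i \in S) x i = \sum_(i in S) x i.
  by apply: eq_bigl => i; rewrite andb_idl //; apply: Ss.
by rewrite lerDl sumr_ge0.
Qed.

Lemma sum_transfer (J : {set Q}) (x : Q -> R) c p q : p \notin J -> q \in J ->
  \sum_(i in J) (x i + c * ((i == q)%:R - (i == p)%:R)) = \sum_(i in J) x i + c.
Proof.
move=> pJ qJ; rewrite big_split /= -mulr_sumr.
suff -> : \sum_(i in J) ((i == q)%:R - (i == p)%:R) = 1 :> R by rewrite mulr1.
rewrite sumrB (bigD1 q) //= eqxx big1 => [|i /andP[_ /negbTE->] //].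
by rewrite big1 ?addr0 ?subr0 // => i iJ; case: eqVneq iJ pJ => // ->->.
Qed.

End Sums.

Lemma connect_path_refine (T : finType) (e : rel T) x s : path (connect e) x s ->
  exists2 p, path e x p & {subset x :: s <= x :: p}.
Proof.
elim: s x => [|y s IH] x /=; first by exists [::].
case/andP=> /connectP[p1 pth1 ->] /IH[p2 pth2 sub2].
exists (p1 ++ p2) => [|z]; first by rewrite cat_path pth1 pth2.
rewrite in_cons => /predU1P[-> | /sub2]; first exact: mem_head.
rewrite !in_cons mem_cat => /predU1P[-> | ->]; last by rewrite !orbT.
by have := mem_last x p1; rewrite in_cons => /orP[->|->]; rewrite ?orbT.
Qed.

Section Descriptions.
Variables (R : realFieldType) (Q : finType) (C : (Q -> R) -> Prop).
Variables (m : nat) (D : 'I_m -> ineq Q).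
Hypothesis describes : forall x, C x <-> forall j, sat_ineq x (D j).

Lemma described_tight_sumle x :
  C x -> (forall t, 1 < t -> ~ C (fun i => t * x i)) ->
  exists2 J : {set Q},
    (forall y, C y -> \sum_(i in J) y i <= 1) & \sum_(i in J) x i = 1.
Proof.
move=> Cx unbounded.
pose lhs j := if D j is Ineq_sumle J then \sum_(i in J) x i else 0.
have [/existsP[j] | /existsPn loose] := boolP [exists j, lhs j == 1].
  rewrite /lhs; case Dj: (D j) => [i | J] /eqP tight.
    by move: (@oner_neq0 R); rewrite tight eqxx.
  by exists J => // y /describes /(_ j); rewrite Dj.
pose M := \big[Order.max/0]_j lhs j.
have lhs_lt1 j : lhs j < 1.
  have := loose j; have := proj1 (describes x) Cx j; rewrite /lhs.
  by case: (D j) => [i | J] /=; rewrite ?ltr01 // lt_def eq_sym => -> ->.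
have M_ge0 : 0 <= M by apply: bigmax_ge_id.
have M_lt1 : M < 1 by apply: bigmax_lt => // j _; apply: lhs_lt1.
pose t := 2 / (1 + M).
have tM : t * (1 + M) = 2 by rewrite divfK // gt_eqF //; lra.
have t_gt1 : 1 < t by nra.
case: (unbounded t t_gt1); apply/describes => j.
have : lhs j <= M by apply: le_bigmax.
have := proj1 (describes x) Cx j.
rewrite /lhs -/M; case: (D j) => [i | J] /=; first by move=> xi _; nra.
by rewrite -mulr_sumr => _ JM; nra.
Qed.

End Descriptions.

Section MarkedPoset.
Variables (R : realFieldType) (d : Order.disp_t) (P : finPOrderType d)
  (Pstar : {set P}) (lam : P -> R).
Local Notation U := (unmarked Pstar).
Local Notation cov := (@covers d P).
Local Notation maximal_chain a ps b := (path cov a (rcons (map val ps) b)).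
Hypothesis marked : marked_poset Pstar lam.

Lemma lam_le a b : a \in Pstar -> b \in Pstar -> (a <= b)%O -> lam a <= lam b.
Proof. by case: marked => homo _ _; apply: homo. Qed.

Lemma exists_marked_path_down (u : U) :
  exists a (ps : seq U), a \in Pstar /\ maximal_chain a ps (val u).
Proof.
move: {2}_.+1 (ltnSn #|[set z | (z < val u)%O]|) => n; elim: n u => // n IH u.
rewrite ltnS => le_n.
have [q qu] : exists q, (q < val u)%O.
  apply/existsP; apply: contraR (valP u) => /existsPn noBelow.
  case: marked => _ minS _; apply: minS => q qu.
  by move: (noBelow q); rewrite lt_neqAle qu andbT negbK => /eqP.
have [w _ wu] := exists_covers_le qu.
have [wS | wU] := boolP (w \in Pstar); first by exists w, [::]; rewrite /= wu.
have [|a [ps [aS pth]]] := IH (exist _ w wU).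
  exact: leq_trans (proper_card (proper_below (covers_lt wu))) le_n.
by exists a, (rcons ps (exist _ w wU)); rewrite map_rcons rcons_path pth last_rcons.
Qed.

Lemma exists_marked_path_up (u : U) :
  exists b (ps : seq U), b \in Pstar /\ maximal_chain (val u) ps b.
Proof.
move: {2}_.+1 (ltnSn #|[set z | (val u < z)%O]|) => n; elim: n u => // n IH u.
rewrite ltnS => le_n.
have [q uq] : exists q, (val u < q)%O.
  apply/existsP; apply: contraR (valP u) => /existsPn noAbove.
  case: marked => _ _ maxS; apply: maxS => q uq.
  by move: (noAbove q); rewrite lt_def uq andbT negbK => /eqP.
have [w uw _] := exists_covers_ge uq.
have [wS | wU] := boolP (w \in Pstar); first by exists w, [::]; rewrite /= uw.
have [|b [ps [bS pth]]] := IH (exist _ w wU).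
  exact: leq_trans (proper_card (proper_above (covers_lt uw))) le_n.
by exists b, (exist _ w wU :: ps); rewrite /= uw.
Qed.

Lemma marked_chain_polytope_of_potential (x : U -> R) (F : P -> R) :
  (forall u, 0 <= x u) ->
  (forall m, m \in Pstar -> F m = lam m) ->
  (forall p (u : U), covers p (val u) -> F p + x u <= F (val u)) ->
  (forall p m, covers p m -> m \in Pstar -> F p <= F m) ->
  marked_chain_polytope Pstar lam x.
Proof.
move=> x_ge0 F_marked F_unmarked F_into_marked; split=> // a b ps aS bS.
rewrite -(F_marked a aS) -(F_marked b bS) lerBrDl.
elim: ps a {aS} => [|u ps IH] a /=.
  by rewrite big_nil addr0 andbT => /F_into_marked; apply.
case/andP=> au pth; rewrite big_cons addrA.
exact: le_trans (lerD (F_unmarked _ _ au) (lexx _)) (IH _ pth).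
Qed.

Definition unmarked_covers : rel U := fun u v => covers (val u) (val v).
Definition unmarked_le : rel U := connect unmarked_covers.

Lemma unmarked_le_val u v : unmarked_le u v -> (val u <= val v)%O.
Proof.
case/connectP=> p + ->; elim: p u => [|w p IH] u /=; first by rewrite lexx.
by case/andP=> /covers_lt/ltW uw /IH; apply: le_trans.
Qed.

Lemma unmarked_le_porder : is_porder unmarked_le.
Proof.
split=> [u | u v /andP[uv vu] | v u w]; first exact: connect0.
  by apply: val_inj; apply: le_anti; rewrite !unmarked_le_val.
exact: connect_trans.
Qed.

Lemma sorted_unmarked_chain s :
  sorted unmarked_covers s -> is_chain unmarked_le [set u in s].
Proof.
elim: s => [|w s IH] pth u v; rewrite !inE //.
move=> /predU1P[-> | us] /predU1P[-> | vs]; first by left; apply: connect0.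
- by left; apply: (path_connect pth); rewrite inE vs orbT.
- by right; apply: (path_connect pth); rewrite inE us orbT.
- by apply: (IH (path_sorted pth)); rewrite inE.
Qed.

Lemma maximal_chain_uniq a b (ps : seq U) : maximal_chain a ps b -> uniq ps.
Proof.
move=> /covers_path_lt chain_lt.
have := sorted_uniq lt_trans ltxx (chain_lt : sorted _ (a :: _)).
by rewrite cons_uniq rcons_uniq (map_inj_uniq val_inj) => /and3P[].
Qed.

Lemma maximal_chain_sorted a b (ps : seq U) :
  maximal_chain a ps b -> sorted unmarked_covers ps.
Proof.
rewrite rcons_path => /andP[+ _]; case: ps => //= u ps /andP[_].
by rewrite path_map.
Qed.

Lemma chain_in_maximal_chain (S : {set U}) :
  is_chain unmarked_le S -> S != set0 ->
  exists a b (ps : seq U),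
    [/\ a \in Pstar, b \in Pstar, maximal_chain a ps b & {subset S <= ps}].
Proof.
move=> S_chain /set0Pn[u0 u0S].
have sorted_S : sorted unmarked_le (sort unmarked_le (enum S)).
  apply: (@sort_sorted_in _ [in S]); last by apply/allP => u; rewrite mem_enum.
  by move=> u v uS vS; apply/orP; exact: S_chain.
have memS u : (u \in sort unmarked_le (enum S)) = (u \in S) by rewrite mem_sort mem_enum.
move: (sort _ _) sorted_S memS => [|u s] sorted_S memS.
  by move: (memS u0); rewrite u0S.
have [p pth sp] := connect_path_refine sorted_S.
have [a [ps1 [aS pth1]]] := exists_marked_path_down u.
have [b [ps2 [bS pth2]]] := exists_marked_path_up (last u p).
exists a, b, (ps1 ++ u :: p ++ ps2); split=> //.
  rewrite map_cat /= map_cat rcons_cat /= rcons_cat cat_path /= cat_path.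
  rewrite last_map path_map pth pth2.
  by move: pth1; rewrite rcons_path !andbT.
move=> v; rewrite -memS => /sp.
by rewrite mem_cat !in_cons mem_cat => /orP[->|->]; rewrite ?orbT.
Qed.

Lemma width_one_chain_polytope :
  (forall a b (ps : seq U), a \in Pstar -> b \in Pstar ->
     maximal_chain a ps b -> lam b - lam a = 1) ->
  forall x, marked_chain_polytope Pstar lam x <-> chain_polytope unmarked_le x.
Proof.
move=> width1 x; split=> -[x_ge0 x_chain]; split=> //.
  move=> S S_chain; have [->|S_ne0] := eqVneq S set0; first by rewrite big_set0 ler01.
  have [a [b [ps [aS bS pth Sps]]]] := chain_in_maximal_chain S_chain S_ne0.
  rewrite -(width1 a b ps aS bS pth); apply: le_trans (x_chain a b ps aS bS pth).
  exact: sum_set_le_seq (maximal_chain_uniq pth) Sps.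
move=> a b ps aS bS pth.
rewrite (width1 a b ps aS bS pth) big_uniq ?(maximal_chain_uniq pth) //.
rewrite (eq_bigl [in [set u in ps]]) => [|u]; last by rewrite inE.
by apply: x_chain; apply: sorted_unmarked_chain; exact: maximal_chain_sorted pth.
Qed.

Hypotheses (strict : strict_marked Pstar lam) (regular : regular_marked Pstar lam).

Lemma regular_lam_le p q a b : covers p q -> a \in Pstar -> b \in Pstar ->
  (a <= q)%O -> (p <= b)%O -> lam a <= lam b.
Proof. by move=> pq aS bS aq pb; case: (regular pq aS bS aq pb) => [->|/ltW]. Qed.

Section MaximalChain.
Variables (a b : P) (ps : seq U).
Hypotheses (aS : a \in Pstar) (bS : b \in Pstar)
  (chain : maximal_chain a ps b).
Local Notation k := (size ps).

Definition node i := nth a (a :: rcons (map val ps) b) i.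

Lemma node_covers i : (i <= k)%N -> covers (node i) (node i.+1).
Proof.
by move=> ik; move/(pathP a): chain => /(_ i); rewrite size_rcons size_map ltnS; apply.
Qed.

Lemma node_last : node k.+1 = b.
Proof. by rewrite /node /= nth_rcons size_map ltnn eqxx. Qed.

Lemma node_le i j : (i <= j)%N -> (j <= k.+1)%N -> (node i <= node j)%O.
Proof.
move=> ij jk; have sorted_nodes : sorted <=%O (a :: rcons (map val ps) b).
  by apply: (sub_path (fun x y (xy : (x < y)%O) => ltW xy)); apply: covers_path_lt.
apply: (sorted_leq_nth le_trans lexx a sorted_nodes) => //;
  rewrite inE /= size_rcons size_map ltnS //.
exact: leq_trans ij jk.
Qed.

Lemma a_le_node i : (i <= k.+1)%N -> (a <= node i)%O.
Proof. exact: node_le (leq0n i). Qed.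

Lemma node_le_b i : (i <= k.+1)%N -> (node i <= b)%O.
Proof. by move=> ik; rewrite -node_last; apply: node_le. Qed.

Lemma node_unmarked i : (0 < i)%N -> (i <= k)%N -> node i \notin Pstar.
Proof.
case: i => // i _ ik; rewrite /node /= nth_rcons size_map ik.
have /mapP[u _ ->] : nth a (map val ps) i \in map val ps by rewrite mem_nth ?size_map.
exact: valP u.
Qed.

Lemma node_index u : u \in ps -> node (index u ps).+1 = val u.
Proof.
move=> uin; rewrite /node /= nth_rcons size_map index_mem uin.
by rewrite (nth_map u) ?index_mem // nth_index.
Qed.

Lemma lam_a_lt_b : lam a < lam b.
Proof.
apply: strict => //.
exact: lt_le_trans (covers_lt (node_covers (leq0n k))) (node_le_b _).
Qed.

(* The defaults [lam a] and [lam b] are attained on all nodes, as a <= node i <= b. *)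
Definition lam_below x :=
  \big[Order.max/lam a]_(m | (m \in Pstar) && (m <= x)%O) lam m.
Definition lam_above x :=
  \big[Order.min/lam b]_(m | (m \in Pstar) && (x <= m)%O) lam m.

Lemma lam_below_homo x y : (x <= y)%O -> lam_below x <= lam_below y.
Proof.
move=> xy; apply: bigmax_le => [|m /andP[mS mx]]; first exact: bigmax_ge_id.
by apply: le_bigmax_cond; rewrite mS (le_trans mx xy).
Qed.

Lemma lam_above_homo x y : (x <= y)%O -> lam_above x <= lam_above y.
Proof.
move=> xy; apply: le_bigmin => [|m /andP[mS ym]]; first exact: bigmin_le_id.
by apply: bigmin_le_cond; rewrite mS (le_trans xy ym).
Qed.

Lemma below_le_above i : (i <= k)%N -> lam_below (node i.+1) <= lam_above (node i).
Proof.
move=> ik; have across m m' : m \in Pstar -> m' \in Pstar ->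
    (m <= node i.+1)%O -> (node i <= m')%O -> lam m <= lam m'.
  by move=> mS m'S; apply: regular_lam_le (node_covers ik) mS m'S.
have a_le : (a <= node i.+1)%O by apply: a_le_node.
have le_b : (node i <= b)%O by apply/node_le_b/leqW.
by apply: bigmax_le => [|m /andP[mS mle]]; apply: le_bigmin => [|m' /andP[m'S lem']];
  apply: across.
Qed.

Lemma below_lt_above i : (0 < i)%N -> (i < k)%N ->
  lam_below (node i.+1) < lam_above (node i).
Proof.
move=> i0 ik; have cov_i := node_covers (ltnW ik).
have across m m' : m \in Pstar -> m' \in Pstar ->
    (m <= node i.+1)%O -> (node i <= m')%O -> lam m < lam m'.
  move=> mS m'S mle lem'; case: (regular cov_i mS m'S mle lem') => // mm'.
  rewrite -mm' in lem'; case: (covers_between cov_i lem' mle) => mE.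
    by move: (node_unmarked i0 (ltnW ik)); rewrite -mE mS.
  by move: (node_unmarked (ltn0Sn i) ik); rewrite -mE mS.
have a_le : (a <= node i.+1)%O by apply/a_le_node/ltnW.
have le_b : (node i <= b)%O by apply/node_le_b/leqW/ltnW.
by apply: bigmax_lt => [|m /andP[mS mle]]; apply: lt_bigmin => [|m' /andP[m'S lem']];
  apply: across.
Qed.

Lemma uniform_slack : exists2 e, 0 < e & forall i, (0 < i)%N -> (i < k)%N ->
  e <= lam_above (node i) - lam_below (node i.+1).
Proof.
exists (\big[Order.min/1]_(i < k | (0 < i)%N)
          (lam_above (node i) - lam_below (node i.+1))).
  by apply: lt_bigmin => // i i0; rewrite subr_gt0 below_lt_above.
by move=> i i0 ik; apply: (@bigmin_le_cond _ _ _ _ (Ordinal ik)).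
Qed.

Definition mid_height i := (lam_below (node i.+1) + lam_above (node i)) / 2.

Lemma mid_height_step i : (i < k)%N -> mid_height i <= mid_height i.+1.
Proof.
move=> ik; rewrite /mid_height.
have := lam_below_homo (node_le (leqnSn i.+1) ik).
have := lam_above_homo (node_le (leqnSn i) (leqW ik)).
lra.
Qed.

Lemma below_le_mid i : (i <= k)%N -> lam_below (node i.+1) <= mid_height i.
Proof. by move=> /below_le_above; rewrite /mid_height; lra. Qed.

Lemma mid_le_above i : (i <= k)%N -> mid_height i <= lam_above (node i).
Proof. by move=> /below_le_above; rewrite /mid_height; lra. Qed.

Lemma mid_height0 : mid_height 0 = lam a.
Proof.
have below1 : lam_below (node 1) = lam a.
  apply/le_anti/andP; split; last exact: bigmax_ge_id.
  apply: bigmax_le => [|m /andP[mS m1]]; first exact: lexx.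
  exact: regular_lam_le (node_covers (leq0n k)) mS aS m1 (lexx a).
have above0 : lam_above (node 0) = lam a.
  apply/le_anti/andP; split; first by apply: bigmin_le_cond; rewrite aS lexx.
  apply: le_bigmin => [|m /andP[mS am]]; apply: lam_le => //.
  exact: node_le_b (leq0n _).
by rewrite /mid_height below1 above0; lra.
Qed.

Lemma mid_height_last : mid_height k = lam b.
Proof.
have belowk : lam_below (node k.+1) = lam b.
  rewrite node_last; apply/le_anti/andP; split; last first.
    by apply: le_bigmax_cond; rewrite bS lexx.
  apply: bigmax_le => [|m /andP[mS mb]]; apply: lam_le => //.
  exact: node_le_b (leq0n _).
have abovek : lam_above (node k) = lam b.
  apply/le_anti/andP; split; first by apply: bigmin_le_cond; rewrite bS node_le_b.
  apply: le_bigmin => [|m /andP[mS km]]; first exact: lexx.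
  by apply: regular_lam_le (node_covers (leqnn k)) bS mS _ km; rewrite node_last.
by rewrite /mid_height belowk abovek; lra.
Qed.

Definition increments (g : nat -> R) (u : U) :=
  if u \in ps then g (index u ps).+1 - g (index u ps) else 0.

Lemma increments_supp g u : increments g u != 0 -> u \in ps.
Proof. by rewrite /increments; case: ifP => //; rewrite eqxx. Qed.

Lemma sum_increments g : \sum_(u <- ps) increments g u = g k - g 0.
Proof.
rewrite -(telescope_index g (maximal_chain_uniq chain)).
by apply: eq_big_seq => u uin; rewrite /increments uin.
Qed.

Section Heights.
Variable g : nat -> R.
Hypotheses (g_step : forall i, (i < k)%N -> g i <= g i.+1)
  (g_ge_below : forall i, (i <= k)%N -> lam_below (node i.+1) <= g i)
  (g_le_above : forall i, (i <= k)%N -> g i <= lam_above (node i)).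

Lemma heights_homo :
  {in [pred i | (i <= k)%N] &, {homo g : i j / (i <= j)%N >-> i <= j}}.
Proof.
apply: homo_leq_in => [x | y x z | i j _ jk l /andP[_ /ltnW lj] | i _ ik] /=.
- exact: lexx.
- exact: le_trans.
- by move: jk; rewrite !inE; apply: leq_trans.
- exact: g_step ik.
Qed.

(* [height_floor] lies below every value taken by [potential], so it is a neutral
   default for both maxima. *)
Definition height_floor := Order.min (g 0) (\big[Order.min/g 0]_(m in Pstar) lam m).

Lemma floor_le_height i : (i <= k)%N -> height_floor <= g i.
Proof. by move=> ik; rewrite ge_min heights_homo ?inE. Qed.

Lemma floor_le_lam m : m \in Pstar -> height_floor <= lam m.
Proof. by move=> mS; rewrite ge_min; apply/orP; right; apply: bigmin_le_cond. Qed.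

Definition potential x :=
  Order.max (\big[Order.max/height_floor]_(m | (m \in Pstar) && (m <= x)%O) lam m)
            (\big[Order.max/height_floor]_(i < k | (node i.+1 <= x)%O) g i.+1).

Lemma potential_homo x y : (x <= y)%O -> potential x <= potential y.
Proof.
move=> xy; rewrite ge_max !le_max.
apply/andP; split; apply/orP; [left | right]; apply: bigmax_le; try exact: bigmax_ge_id.
- by move=> m /andP[mS mx]; apply: le_bigmax_cond; rewrite mS (le_trans mx xy).
- by move=> i ix; apply: le_bigmax_cond; rewrite (le_trans ix xy).
Qed.

Lemma potential_marked m : m \in Pstar -> potential m = lam m.
Proof.
move=> mS; apply/le_anti/andP; split; last first.
  by rewrite le_max; apply/orP; left; apply: le_bigmax_cond; rewrite mS lexx.
rewrite ge_max; apply/andP; split; apply: bigmax_le; try exact: floor_le_lam.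
  by move=> m' /andP[m'S m'm]; apply: lam_le.
move=> i im; apply: le_trans (g_le_above (ltn_ord i)) _.
by apply: bigmin_le_cond; rewrite mS.
Qed.

Lemma potential_cover p (v : U) :
  covers p (val v) -> potential p + increments g v <= potential (val v).
Proof.
move=> pv; rewrite /increments; case: ifPn => [vin | _]; last first.
  by rewrite addr0 potential_homo // ltW // covers_lt.
have jk : (index v ps < k)%N by rewrite index_mem.
have nodev := node_index vin; move: jk nodev; set j := index v ps => jk nodev.
have top : g j.+1 <= potential (val v).
  rewrite le_max; apply/orP; right.
  by apply: (@le_bigmax_cond _ _ _ _ (Ordinal jk)); rewrite /= nodev.
have bottom : potential p <= g j.
  rewrite ge_max; apply/andP; split; apply: bigmax_le;
    try exact/floor_le_height/ltnW.
    move=> m /andP[mS mp]; apply: le_trans (g_ge_below (ltnW jk)).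
    by apply: le_bigmax_cond; rewrite mS nodev (le_trans mp (ltW (covers_lt pv))).
  move=> i ip; apply: heights_homo; rewrite ?inE ?(ltnW jk) //.
  rewrite ltnNge; apply/negP => ji.
  have ji' : (j.+1 <= i.+1)%N := ji.
  have := le_lt_trans (le_trans (node_le ji' (leqW (ltn_ord i))) ip) (covers_lt pv).
  by rewrite nodev ltxx.
lra.
Qed.

Lemma increments_in_polytope : marked_chain_polytope Pstar lam (increments g).
Proof.
apply: (marked_chain_polytope_of_potential (F := potential)).
- move=> u; rewrite /increments; case: ifP => [uin | _]; last exact: lexx.
  by rewrite subr_ge0 g_step // index_mem.
- exact: potential_marked.
- exact: potential_cover.
- by move=> p m pm _; apply/potential_homo/ltW/covers_lt.
Qed.

End Heights.

Definition step (u : U) i : R := (index u ps < i)%N%:R.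

Lemma step_succ u i : step u i.+1 - step u i = (index u ps == i)%:R.
Proof. by rewrite /step ltnS leq_eqVlt; case: ltngtP; rewrite /= ?subrr ?subr0. Qed.

Lemma increments_shift g c p q u : p \in ps -> q \in ps ->
  increments (fun i => g i + c * (step q i - step p i)) u
  = increments g u + c * ((u == q)%:R - (u == p)%:R).
Proof.
move=> pin qin; rewrite /increments; case: ifPn => [uin | uout]; last first.
  have uq : u != q by apply: contraNneq uout => ->.
  have up : u != p by apply: contraNneq uout => ->.
  by rewrite (negbTE uq) (negbTE up) subrr mulr0 addr0.
have succ w : w \in ps -> step w (index u ps).+1 - step w (index u ps) = (u == w)%:R.
  by move=> win; rewrite step_succ (inj_in_eq (@index_inj _ u ps)) // eq_sym.
rewrite -succ // -succ //; lra.
Qed.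

Lemma shifted_mid_in_polytope p q :
  p \in ps -> q \in ps -> 0 < increments mid_height p ->
  exists2 c, 0 < c & marked_chain_polytope Pstar lam
    (increments (fun i => mid_height i + c * (step q i - step p i))).
Proof.
move=> pin qin p_gt0; have [e e_gt0 slack] := uniform_slack.
pose c := Order.min (increments mid_height p) (e / 2).
have c_gt0 : 0 < c by rewrite lt_min p_gt0 divr_gt0.
have c_le_p : c <= increments mid_height p by rewrite ge_min lexx.
have c_le_e : c <= e / 2 by rewrite ge_min lexx orbT.
pose s i := step q i - step p i.
have s_cases i : s i = -1 \/ s i = 0 \/ s i = 1.
  rewrite /s /step; case: (_ < i)%N; case: (_ < i)%N; rewrite /= ?subrr ?subr0 ?sub0r;
  by [right; left | right; right | left].
have s_inner i : (i <= k)%N -> s i != 0 -> (0 < i)%N && (i < k)%N.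
  case: i => [|i] ik; first by rewrite /s /step !ltn0 subrr eqxx.
  rewrite [(i.+1 < k)%N]ltn_neqAle ik andbT /=; apply: contra_neq => ->.
  by rewrite /s /step !index_mem pin qin subrr.
have shifted_bounds i : (i <= k)%N ->
    lam_below (node i.+1) <= mid_height i + c * s i <= lam_above (node i).
  move=> ik; have [-> | s_ne0] := eqVneq (s i) 0.
    by rewrite mulr0 addr0 below_le_mid ?mid_le_above.
  have /andP[i_gt0 i_lt] := s_inner i ik s_ne0.
  have := slack i i_gt0 i_lt; rewrite /mid_height.
  by case: (s_cases i) => [-> | [-> | ->]] slack_i; apply/andP; split; lra.
exists c => //; apply: increments_in_polytope => i ik; last 2 first.
- by case/andP: (shifted_bounds i ik).
- by case/andP: (shifted_bounds i ik).
- have mid_jump : c * (index p ps == i)%:R <= mid_height i.+1 - mid_height i.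
    case: eqP => [<- | _]; last by rewrite mulr0 subr_ge0 mid_height_step.
    by rewrite mulr1; move: c_le_p; rewrite /increments pin.
  have := step_succ q i; have := step_succ p i.
  have : 0 <= c * (index q ps == i)%:R by rewrite mulr_ge0 ?ler0n // ltW.
  nra.
Qed.

Lemma tight_sumle_support (J : {set U}) :
  (forall x, marked_chain_polytope Pstar lam x -> \sum_(u in J) x u <= 1) ->
  \sum_(u in J) increments mid_height u = 1 ->
  forall u, u \notin J -> increments mid_height u = 0.
Proof.
move=> validJ tightJ p pJ; apply/eqP; apply: contraT => p_ne0.
have Cy := increments_in_polytope mid_height_step below_le_mid mid_le_above.
have p_gt0 : 0 < increments mid_height p by rewrite lt_def p_ne0 (proj1 Cy).
have [q qJ q_ne0] : exists2 q, q \in J & increments mid_height q != 0.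
  apply/exists_inP; apply: contraT => /exists_inPn J0; move: tightJ.
  rewrite big1 => [/esym/eqP | u /J0 /negPn /eqP //]; by rewrite oner_eq0.
have pin := increments_supp p_ne0; have qin := increments_supp q_ne0.
have [c c_gt0 Cc] := shifted_mid_in_polytope pin qin p_gt0.
have := validJ _ Cc; under eq_bigr do rewrite increments_shift //.
by rewrite sum_transfer // tightJ; lra.
Qed.

Lemma chain_width m (D : 'I_m -> ineq U) :
  (forall x, marked_chain_polytope Pstar lam x <-> forall j, sat_ineq x (D j)) ->
  lam b - lam a = 1.
Proof.
move=> describes; set y := increments mid_height.
have Cy := increments_in_polytope mid_height_step below_le_mid mid_le_above.
have y_sum : \sum_(u <- ps) y u = lam b - lam a.
  by rewrite sum_increments mid_height_last mid_height0.
have unbounded t : 1 < t -> ~ marked_chain_polytope Pstar lam (fun u => t * y u).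
  move=> t_gt1 /proj2 /(_ a b ps aS bS chain); rewrite -mulr_sumr y_sum.
  by have := lam_a_lt_b; nra.
have [J validJ tightJ] := described_tight_sumle describes Cy unbounded.
rewrite -y_sum -tightJ big_uniq ?(maximal_chain_uniq chain) //.
rewrite big_mkcond [RHS]big_mkcond; apply: eq_bigr => u _.
case: (boolP (u \in ps)) => uin; case: (boolP (u \in J)) => uJ //.
  exact: (tight_sumle_support validJ tightJ uJ).
by rewrite /y /increments (negbTE uin).
Qed.

End MaximalChain.

End MarkedPoset.

Theorem lemma4p1 (R : realFieldType) (d : Order.disp_t) (P : finPOrderType d)
    (Pstar : {set P}) (lam : P -> R) :
  marked_poset Pstar lam ->
  strict_marked Pstar lam ->
  regular_marked Pstar lam ->
  (exists (m : nat) (D : 'I_m -> ineq (unmarked Pstar)),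
      irredundant_description (marked_chain_polytope Pstar lam) D) ->
  exists r : rel (unmarked Pstar),
    is_porder r /\
    forall x : unmarked Pstar -> R,
      marked_chain_polytope Pstar lam x <-> chain_polytope r x.
Proof.
(* Irredundancy of the description is not needed. *)
move=> marked strict regular [m [D [describes _]]].
exists (unmarked_le (Pstar := Pstar)); split; first exact: unmarked_le_porder.
apply: width_one_chain_polytope => // a b ps aS bS chain.
by apply: (chain_width marked strict regular aS bS chain); exact: describes.
Qed.
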